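(* Consider the two-observation Lewis signaling game with observations $o_1,o_2$ (each occurring with probability $p(o_1)=p(o_2)=\tfrac12$), messages $m_1,m_2$, actions $a_1,a_2$, and reward $R(o_i,a_j)=1$ if $i=j$ and $R(o_i,a_j)=0$ if $i\neq j$. An instructor with parameter $S\in[0,1]$ sends message $m_j$ on observation $o_i$ with probability $\pi_S(m_j\mid o_i)=S$ if $i=j$ and $1-S$ otherwise; an executor with parameter $L\in[0,1]$ takes action $a_j$ on message $m_i$ with probability $\pi_L(a_j\mid m_i)=L$ if $i=j$ and $1-L$ otherwise. The expected reward is $$J(S,L)=\sum_{o,m,a}p(o)\,\pi_S(m\mid o)\,\pi_L(a\mid m)\,R(o,a)=\tfrac12 SL+\tfrac12(1-S)(1-L),$$ so that $\partial J/\partial S=L-\tfrac12$ and $\partial J/\partial L=S-\tfrac12$. Let $(S(t),L(t))_{t\ge 0}$ evolve by the clipped gradient flow: $\frac{dS}{dt}=L-\tfrac12$ and $\frac{dL}{dt}=S-\tfrac12$, except that the derivative of a parameter is set to $0$ whenever that parameter equals $0$ or $1$. Suppose the initial values satisfy $S(0),L(0)\in(0,1)$ and $L(0)+S(0)<1$. Then the agents undergo semantic drift: $L(t)$ converges to $0$ as $t\to\infty$.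
   Context: Messages are thought of as natural-language commands ($m_i$ means ''do $a_i$''), so an executor with $L>\tfrac12$ respects the natural-language meaning. An initialization $(S(0),L(0))$ is said to undergo executor semantic drift if, after training, $L<\tfrac12$. *)

From Stdlib Require Import Reals Lra.
From Coquelicot Require Import Coquelicot.
Open Scope R_scope.

Definition J (S L : R) : R := / 2 * S * L + / 2 * (1 - S) * (1 - L).

Definition clip (x v : R) : R :=
  if Req_EM_T x 0 then 0 else if Req_EM_T x 1 then 0 else v.

Definition has_right_deriv (f : R -> R) (t d : R) : Prop :=
  filterlim (fun h => (f (t + h) - f t) / h) (at_right 0) (locally d).

Definition clipped_flow (S L : R -> R) : Prop :=
  forall t, 0 <= t ->
    0 <= S t <= 1 /\ 0 <= L t <= 1 /\
    (0 < t -> continuous S t /\ continuous L t) /\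
    has_right_deriv S t (clip (S t) (L t - / 2)) /\
    has_right_deriv L t (clip (L t) (S t - / 2)).

(** Put W = S + L.  As long as 0 < W <= 1 - c (with c <= 1/2), the clipped
    gradients sum to at most -c, whichever parameters are clipped; hence W
    decreases at rate at least c/2 until it is below any prescribed e > 0 and
    cannot climb back above e, since it only moves continuously.  In particular
    W never exceeds W(0) < 1, which keeps the descent estimate valid, and
    0 <= L <= W forces L(t) -> 0. *)

From Stdlib Require Import Reals Lra Classical.
From Coquelicot Require Import Coquelicot.
Open Scope R_scope.

Lemma real_induction (P : R -> Prop) :
  P 0 ->
  (forall t, 0 <= t -> P t -> exists d, 0 < d /\ forall h, 0 < h < d -> P (t + h)) ->
  (forall t, 0 < t -> (forall s, 0 <= s < t -> P s) -> P t) ->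
  forall t, 0 <= t -> P t.
Proof.
  intros P0 Hstep Hleft b Hb.
  set (E := fun x => x <= b /\ forall s, 0 <= s <= x -> P s).
  assert (E0 : E 0) by (split; [lra | intros s Hs; replace s with 0 by lra; exact P0]).
  destruct (completeness E) as [c [Hub Hlub]].
  { exists b. intros x [Hx _]. exact Hx. }
  { exists 0. exact E0. }
  assert (Hc0 : 0 <= c) by (apply Hub; exact E0).
  assert (Hcb : c <= b) by (apply Hlub; intros x [Hx _]; exact Hx).
  assert (Pbelow : forall s, 0 <= s < c -> P s).
  { intros s Hs.
    destruct (classic (exists x, E x /\ s <= x)) as [[x [[_ Hx] Hsx]] | Hno].
    - apply Hx. lra.
    - assert (c <= s); [|lra].
      apply Hlub. intros x Ex. apply Rnot_lt_le. intro Hsx.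
      apply Hno. exists x. split; [exact Ex | lra]. }
  assert (Pc : P c).
  { destruct (Req_dec c 0) as [-> | Hc]; [exact P0 | apply Hleft; [lra | exact Pbelow]]. }
  destruct (Rle_lt_or_eq_dec c b Hcb) as [Hlt | <-]; [exfalso | exact Pc].
  destruct (Hstep c Hc0 Pc) as [d [Hd Pafter]].
  set (x := Rmin (c + d / 2) b).
  assert (Hx1 := Rmin_l (c + d / 2) b). assert (Hx2 := Rmin_r (c + d / 2) b).
  assert (Hcx : c < x) by (apply Rmin_glb_lt; lra).
  assert (Ex : E x).
  { split; [exact Hx2 |]. intros s Hs.
    destruct (Rlt_le_dec s c) as [Hsc | Hsc]; [apply Pbelow; lra |].
    destruct (Req_dec s c) as [-> | Hsc']; [exact Pc |].
    replace s with (c + (s - c)) by ring. apply Pafter. fold x in Hx1. lra. }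
  assert (x <= c) by (apply Hub; exact Ex). lra.
Qed.

Lemma continuous_le_at_left (f g : R -> R) (a t : R) :
  a < t -> continuous f t -> continuous g t ->
  (forall s, a < s < t -> f s <= g s) -> f t <= g t.
Proof.
  intros Hat Hf Hg Hle.
  assert (Hproper := Proper_StrongProper _ (at_left_proper_filter t)).
  apply (filterlim_le (F := at_left t) f g (f t) (g t)).
  - exists (mkposreal (t - a) ltac:(lra)). intros s Hs Hst. apply Hle.
    change (Rabs (s - t) < t - a) in Hs. apply Rabs_def2 in Hs. lra.
  - exact (filterlim_filter_le_1 _ (filter_le_within _) Hf).
  - exact (filterlim_filter_le_1 _ (filter_le_within _) Hg).
Qed.

Lemma has_right_deriv_plus (f g : R -> R) (t a b : R) :
  has_right_deriv f t a -> has_right_deriv g t b ->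
  has_right_deriv (fun x => f x + g x) t (a + b).
Proof.
  intros Hf Hg. unfold has_right_deriv.
  apply filterlim_ext with (fun h => (f (t + h) - f t) / h + (g (t + h) - g t) / h).
  - intro h. unfold Rdiv. ring.
  - exact (filterlim_comp_2 _ _ Rplus Hf Hg (filterlim_plus a b)).
Qed.

Lemma has_right_deriv_le (f : R -> R) (t d d' : R) :
  has_right_deriv f t d -> d < d' ->
  exists delta, 0 < delta /\ forall h, 0 < h < delta -> f (t + h) <= f t + h * d'.
Proof.
  intros Hf Hd.
  destruct (Hf (fun q => q < d') (open_lt d' d Hd)) as [delta Hdelta].
  exists delta. split; [apply cond_pos |]. intros h [Hh0 Hh1].
  assert (Hq : (f (t + h) - f t) / h < d').
  { apply Hdelta; [| exact Hh0]. change (Rabs (h - 0) < delta). apply Rabs_def1; lra. }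
  apply Rmult_lt_compat_l with (r := h) in Hq; [| exact Hh0].
  replace (h * ((f (t + h) - f t) / h)) with (f (t + h) - f t) in Hq by (field; lra).
  lra.
Qed.

Lemma clip_gradient_sum_le (S L c : R) :
  0 <= S <= 1 -> 0 <= L <= 1 -> 0 < S + L <= 1 - c -> 0 < c <= / 2 ->
  clip S (L - / 2) + clip L (S - / 2) <= - c.
Proof. intros. unfold clip. repeat destruct Req_EM_T; lra. Qed.

Lemma Rmax_sub_le (a e x : R) : 0 <= x -> Rmax a e - x <= Rmax (a - x) e.
Proof.
  intro Hx. unfold Rmax.
  destruct (Rle_dec a e); destruct (Rle_dec (a - x) e); lra.
Qed.

Lemma clipped_flow_sum_le (S L : R -> R) (k e : R) :
  clipped_flow S L -> 0 < k -> 2 * k <= 1 - (S 0 + L 0) -> 2 * k <= / 2 ->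
  0 < e <= S 0 + L 0 ->
  forall t, 0 <= t -> S t + L t <= Rmax (S 0 + L 0 - k * t) e.
Proof.
  intros Hf Hk Hk1 Hk2 He.
  set (W0 := S 0 + L 0) in *.
  apply real_induction.
  - rewrite Rmult_0_r, Rminus_0_r. apply Rmax_l.
  - intros t Ht Pt.
    destruct (Hf t Ht) as [HS [HL [_ [dS dL]]]].
    set (D := clip (S t) (L t - / 2) + clip (L t) (S t - / 2)).
    assert (dW := has_right_deriv_plus S L t _ _ dS dL). fold D in dW.
    destruct (Rlt_le_dec (S t + L t) e) as [Hsmall | Hlarge].
    + assert (HD : D < 1) by (unfold D, clip; repeat destruct Req_EM_T; lra).
      destruct (has_right_deriv_le _ _ _ _ dW HD) as [delta [Hdelta Hup]].
      exists (Rmin delta (e - (S t + L t))). split; [apply Rmin_glb_lt; lra |].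
      intros h Hh.
      assert (Hh1 := Rmin_l delta (e - (S t + L t))).
      assert (Hh2 := Rmin_r delta (e - (S t + L t))).
      assert (H := Hup h ltac:(lra)). assert (H' := Rmax_r (W0 - k * (t + h)) e). lra.
    + assert (HW0 : Rmax (W0 - k * t) e <= W0).
      { apply Rmax_lub; [| lra]. assert (0 <= k * t) by (apply Rmult_le_pos; lra). lra. }
      assert (HD : D < - k).
      { assert (D <= - (2 * k)) by (apply clip_gradient_sum_le; lra). lra. }
      destruct (has_right_deriv_le _ _ _ _ dW HD) as [delta [Hdelta Hup]].
      exists delta. split; [exact Hdelta |]. intros h Hh.
      assert (H := Hup h Hh).
      assert (Hmax := Rmax_sub_le (W0 - k * t) e (k * h) ltac:(apply Rmult_le_pos; lra)).
      replace (W0 - k * (t + h)) with (W0 - k * t - k * h) by ring. lra.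
  - intros t Ht Pbefore.
    (* The bound falls with slope at most k, so left of t it is dominated by
       its value at t plus k (t - s), a continuous function. *)
    destruct (Hf t ltac:(lra)) as [_ [_ [Hcont _]]]. destruct (Hcont Ht) as [cS cL].
    replace (Rmax (W0 - k * t) e) with (Rmax (W0 - k * t) e + k * (t - t)) by ring.
    apply (continuous_le_at_left (fun s => S s + L s)
             (fun s => Rmax (W0 - k * t) e + k * (t - s)) 0 t Ht).
    + exact (continuous_plus S L t cS cL).
    + apply (ex_derive_continuous (fun s => Rmax (W0 - k * t) e + k * (t - s))).
      auto_derive. exact I.
    + intros s Hs.
      assert (Hmax := Rmax_sub_le (W0 - k * s) e (k * (t - s)) ltac:(apply Rmult_le_pos; lra)).
      replace (W0 - k * s - k * (t - s)) with (W0 - k * t) in Hmax by ring.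
      assert (P := Pbefore s ltac:(lra)). lra.
Qed.

Theorem proposition1 (S L : R -> R) :
  clipped_flow S L ->
  0 < S 0 < 1 -> 0 < L 0 < 1 -> L 0 + S 0 < 1 ->
  filterlim L (Rbar_locally p_infty) (locally 0).
Proof.
  intros Hf HS0 HL0 Hsum.
  set (W0 := S 0 + L 0).
  set (c := Rmin (1 - W0) (/ 2)).
  assert (Hc : 0 < c) by (apply Rmin_glb_lt; unfold W0; lra).
  assert (Hc1 := Rmin_l (1 - W0) (/ 2)). assert (Hc2 := Rmin_r (1 - W0) (/ 2)). fold c in Hc1, Hc2.
  apply filterlim_locally. intros eps.
  assert (Heps := cond_pos eps).
  set (e := Rmin (eps / 2) W0).
  assert (He : 0 < e) by (apply Rmin_glb_lt; unfold W0; lra).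
  assert (He1 := Rmin_l (eps / 2) W0). assert (He2 := Rmin_r (eps / 2) W0). fold e in He1, He2.
  assert (Hbound := clipped_flow_sum_le S L (c / 2) e Hf ltac:(lra) ltac:(fold W0; lra) ltac:(lra)
                      ltac:(fold W0; lra)).
  fold W0 in Hbound.
  exists (W0 / (c / 2)). intros t Ht.
  assert (Hct : W0 < c / 2 * t).
  { apply Rmult_lt_compat_l with (r := c / 2) in Ht; [| lra].
    replace (c / 2 * (W0 / (c / 2))) with W0 in Ht by (field; lra). exact Ht. }
  assert (Ht0 : 0 <= t) by (apply Rlt_le, Rlt_trans with (W0 / (c / 2)); [apply Rdiv_lt_0_compat; unfold W0; lra | exact Ht]).
  destruct (Hf t Ht0) as [[HSt _] [[HLt _] _]].
  assert (HWt := Hbound t Ht0).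
  rewrite Rmax_right in HWt by lra.
  change (Rabs (L t - 0) < eps). apply Rabs_def1; lra.
Qed.
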